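(* Let $K$ be a sequence with continuous leading block distribution under $\mathcal F$-expansion, with associated function $f_K^*$. Let $\mu\in\mathcal F^*$ with $\mu(1)=1$ such that there is $t\in\mathbb{N}$ with $\mu(k)=0$ for all $k>t$. Then $$f_K^*\big(\phi(\mu|t\cdot\widehat F-1)\big)\le\lim_{n\to\infty}\frac{\#\{k\le n:\mathrm{LB}_t(K_k)\le\mu|t\}}{n}.$$
   Context: $F$: $F_1=1,F_2=2,F_{n+2}=F_{n+1}+F_n$; $\phi$ golden ratio, $\omega=\phi^{-1}$. Zeckendorf expansion $m=\sum_{k=1}^M\epsilon(k)F_{M-k+1}$ (unique, $\epsilon(k)\in\{0,1\}$, $\epsilon(1)=1$, $\epsilon(k)\epsilon(k+1)=0$); $\mathrm{LB}_s(m)=(\epsilon(1),\dots,\epsilon(s))$ if $M\ge s$. Blocks of equal length are compared lexicographically (equivalently by $\mathbf b\cdot\widehat F:=\sum_k\mathbf b(k)\omega^{k-1}$). $\mathcal F^*$: infinite 0/1 sequences $\mu$ with $\mu(k)\mu(k+1)=0$ and no tail equal to $(1,0,1,0,\dots)$; $\mu|s=(\mu(1),\dots,\mu(s))$, $\mu\cdot\widehat F=\sum_{k\ge1}\mu(k)\omega^{k-1}$. The map $\mu\mapsto\phi(\mu\cdot\widehat F-1)$ is a bijection from $\{\mu\in\mathcal F^*:\mu(1)=1\}$ onto $(0,1)$. A sequence $K$ of positive integers approaching $\infty$ has continuous leading block distribution under $\mathcal F$-expansion if: for every $s\ge2$ and every leading block $\mathbf b$ of length $s$ the limit $\lim_n\#\{k\le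 n:\mathrm{LB}_s(K_k)=\mathbf b\}/n$ exists; for every $\mu\in\mathcal F^*$ with $\mu(1)=1$ the limit $\lim_{s\to\infty}\lim_n\#\{k\le n:\mathrm{LB}_s(K_k)\le\mu|s\}/n$ exists; and the function $f_K^*:[0,1]\to[0,1]$ with $f_K^*(0)=0$, $f_K^*(1)=1$, $f_K^*(\phi(\mu\cdot\widehat F-1))$ equal to that limit, is continuous and increasing. *)

From Stdlib Require Import Reals Lra Lia List ClassicalDescription.
From Coquelicot Require Import Coquelicot.
Import ListNotations.
Open Scope R_scope.

(* Fibonacci numbers F_1 = 1, F_2 = 2, F_{n+2} = F_{n+1} + F_n
   (F 0 = 1 is a dummy value, never used). *)
Fixpoint Fib (n : nat) : nat :=
  match n with
  | O => 1%nat
  | S O => 1%nat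
  | S ((S m) as p) => (Fib p + Fib m)%nat
  end.

Definition phi : R := (1 + sqrt 5) / 2.
Definition omega : R := / phi.

Fixpoint zval (e : list nat) : nat :=
  match e with
  | [] => 0%nat
  | x :: r => (x * Fib (length e) + zval r)%nat
  end.

(* e is the Zeckendorf expansion of m (entries e(k) = nth (k-1) e 0). *)
Definition zeck_exp (m : nat) (e : list nat) : Prop :=
  (forall x, In x e -> x = 0%nat \/ x = 1%nat) /\
  nth 0 e 0%nat = 1%nat /\
  (forall i, (nth i e 0 * nth (S i) e 0)%nat = 0%nat) /\
  m = zval e.

(* LB_s(m) = b : defined only when the expansion has length M >= s. *)
Definition LB (s m : nat) (b : list nat) : Prop :=
  exists e, zeck_exp m e /\ (s <= length e)%nat /\ b = firstn s e.

Definition is_leading_block (s : nat) (b : list nat) : Prop :=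
  exists m, LB s m b.

Fixpoint lex_le (a b : list nat) : Prop :=
  match a, b with
  | [], [] => True
  | x :: a', y :: b' => (x < y)%nat \/ (x = y /\ lex_le a' b')
  | _, _ => False
  end.

(* b . F^ = sum_k b(k) omega^(k-1) *)
Fixpoint bval (b : list nat) : R :=
  match b with
  | [] => 0
  | x :: r => INR x + omega * bval r
  end.

(* Sequences mu indexed from 1 (mu 0 is irrelevant). *)
Definition Fstar (mu : nat -> nat) : Prop :=
  (forall k, (1 <= k)%nat -> (mu k <= 1)%nat) /\
  (forall k, (1 <= k)%nat -> (mu k * mu (S k))%nat = 0%nat) /\
  ~ (exists j, (1 <= j)%nat /\
       forall i, mu (j + 2 * i)%nat = 1%nat /\ mu (j + 2 * i + 1)%nat = 0%nat).

Definition restr (mu : nat -> nat) (s : nat) : list nat := map mu (seq 1 s).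

Definition muF (mu : nat -> nat) : R :=
  Series (fun k => INR (mu (S k)) * omega ^ k).

Fixpoint cnt (P : nat -> Prop) (n : nat) : nat :=
  match n with
  | O => O
  | S n' => (cnt P n' + (if excluded_middle_informative (P n) then 1 else 0))%nat
  end.

Definition ratio (P : nat -> Prop) (n : nat) : R := INR (cnt P n) / INR n.

Definition pos_to_infty (K : nat -> nat) : Prop :=
  (forall k, (1 <= k)%nat -> (0 < K k)%nat) /\
  (forall M, exists N, forall k, (N <= k)%nat -> (M <= K k)%nat).

Definition cont_LBD (K : nat -> nat) (f : R -> R) : Prop :=
  pos_to_infty K /\
  (forall s b, (2 <= s)%nat -> length b = s -> is_leading_block s b ->
     exists l, Un_cv (ratio (fun k => LB s (K k) b)) l) /\
  (forall mu, Fstar mu -> mu 1%nat = 1%nat ->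
     exists (g : nat -> R) (L : R),
       (forall s, Un_cv (ratio (fun k => exists c, LB s (K k) c /\ lex_le c (restr mu s))) (g s)) /\
       Un_cv g L /\
       f (phi * (muF mu - 1)) = L) /\
  f 0 = 0 /\ f 1 = 1 /\
  (forall x, 0 <= x <= 1 -> 0 <= f x <= 1) /\
  (forall x, 0 <= x <= 1 -> forall eps, 0 < eps -> exists delta, 0 < delta /\
     forall y, 0 <= y <= 1 -> Rabs (y - x) < delta -> Rabs (f y - f x) < eps) /\
  (forall x y, 0 <= x <= 1 -> 0 <= y <= 1 -> x <= y -> f x <= f y).

From Stdlib Require Import Reals List.
From Coquelicot Require Import Coquelicot.
From Stdlib Require Import Lra Lia ClassicalDescription.
Import ListNotations.
Open Scope R_scope.

(* Truncating a block of length [s >= t] that is [<= mu|s] gives the leading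
   block of length [t] of the same number, and it is [<= mu|t].  Hence the
   frequencies [g s] of [LB_s(K_k) <= mu|s] satisfy [g s <= g t] for [s >= t],
   so their limit [f_K^*(phi (mu.F^ - 1))] is at most [g t].  Finally, as [mu]
   vanishes beyond [t], the series [mu.F^] is the finite sum [mu|t.F^]. *)

Lemma Un_cv_const (c : R) : Un_cv (fun _ => c) c.
Proof.
  intros eps Heps; exists 0%nat; intros n _.
  unfold Rdist; rewrite Rminus_diag, Rabs_R0; exact Heps.
Qed.

Lemma Un_cv_le_eventually (g : nat -> R) (L c : R) (t : nat) :
  Un_cv g L -> (forall s, (t <= s)%nat -> g s <= c) -> L <= c.
Proof.
  intros Hg Hle.
  apply Rle_cv_lim with (Un := fun n => g (n + t)%nat) (Vn := fun _ => c).
  - intros n; apply Hle; lia.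
  - exact (CV_shift' g t L Hg).
  - apply Un_cv_const.
Qed.

Lemma cnt_le (P Q : nat -> Prop) (n : nat) :
  (forall k, P k -> Q k) -> (cnt P n <= cnt Q n)%nat.
Proof.
  intros HPQ; induction n as [|n IH]; simpl; [lia|].
  destruct (excluded_middle_informative (P (S n))) as [HP|];
    destruct (excluded_middle_informative (Q (S n))) as [|HQ]; try lia.
  exfalso; exact (HQ (HPQ _ HP)).
Qed.

Lemma ratio_le (P Q : nat -> Prop) (n : nat) :
  (forall k, P k -> Q k) -> ratio P n <= ratio Q n.
Proof.
  intros HPQ; unfold ratio.
  destruct n as [|n]; [simpl; lra|].
  apply Rmult_le_compat_r.
  - left; apply Rinv_0_lt_compat, lt_0_INR; lia.
  - apply le_INR, cnt_le, HPQ.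
Qed.

Lemma lex_le_firstn (n : nat) (a b : list nat) :
  lex_le a b -> lex_le (firstn n a) (firstn n b).
Proof.
  revert a b; induction n as [|n IH]; intros [|x a] [|y b] Hab; simpl in *; auto.
  destruct Hab as [Hxy|[-> Hab]]; auto.
Qed.

Lemma restr_firstn (mu : nat -> nat) (t s : nat) :
  (t <= s)%nat -> firstn t (restr mu s) = restr mu t.
Proof.
  intros Hts; unfold restr; rewrite firstn_map; f_equal.
  replace s with (t + (s - t))%nat by lia.
  rewrite seq_app, firstn_app, firstn_all2 by (rewrite length_seq; lia).
  rewrite length_seq, Nat.sub_diag; apply app_nil_r.
Qed.

Lemma LB_firstn (s t m : nat) (c : list nat) :
  (t <= s)%nat -> LB s m c -> LB t m (firstn t c).
Proof.
  intros Hts [e [He [Hlen ->]]].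
  exists e; split; [exact He|]; split; [lia|].
  rewrite firstn_firstn; f_equal; lia.
Qed.

Lemma ratio_LB_le_restr_antitone (K mu : nat -> nat) (t s n : nat) :
  (t <= s)%nat ->
  ratio (fun k => exists c, LB s (K k) c /\ lex_le c (restr mu s)) n
  <= ratio (fun k => exists c, LB t (K k) c /\ lex_le c (restr mu t)) n.
Proof.
  intros Hts; apply ratio_le; intros k [c [Hc Hlex]].
  exists (firstn t c); split.
  - exact (LB_firstn s t (K k) c Hts Hc).
  - rewrite <- (restr_firstn mu t s Hts); exact (lex_le_firstn t c _ Hlex).
Qed.

Lemma restr_S (mu : nat -> nat) (n : nat) : restr mu (S n) = restr mu n ++ [mu (S n)].
Proof. unfold restr; rewrite seq_S, map_app; reflexivity. Qed.

Lemma bval_rcons (b : list nat) (x : nat) :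
  bval (b ++ [x]) = bval b + INR x * omega ^ length b.
Proof. induction b as [|y b IH]; simpl; [|rewrite IH]; ring. Qed.

Lemma bval_restr_S (mu : nat -> nat) (n : nat) :
  bval (restr mu (S n)) = sum_f_R0 (fun k => INR (mu (S k)) * omega ^ k) n.
Proof.
  induction n as [|n IH]; [unfold restr; simpl; ring|].
  rewrite restr_S, bval_rcons, IH.
  unfold restr; rewrite length_map, length_seq; reflexivity.
Qed.

Lemma bval_restr_stable (mu : nat -> nat) (t m : nat) :
  (forall k, (t < k)%nat -> mu k = 0%nat) ->
  bval (restr mu (t + m)) = bval (restr mu t).
Proof.
  intros Hzero; induction m as [|m IH]; [rewrite Nat.add_0_r; reflexivity|].
  rewrite Nat.add_succ_r, restr_S, bval_rcons, IH, Hzero by lia.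
  simpl; ring.
Qed.

Lemma muF_restr (mu : nat -> nat) (t : nat) :
  (forall k, (t < k)%nat -> mu k = 0%nat) -> muF mu = bval (restr mu t).
Proof.
  intros Hzero; unfold muF; apply is_series_unique, is_series_Reals.
  intros eps Heps; exists t; intros n Hn.
  rewrite <- bval_restr_S.
  replace (S n) with (t + (S n - t))%nat by lia.
  rewrite bval_restr_stable by exact Hzero.
  unfold Rdist; rewrite Rminus_diag, Rabs_R0; exact Heps.
Qed.

Theorem lemma5p17 (K : nat -> nat) (f : R -> R) (mu : nat -> nat) (t : nat) :
  cont_LBD K f ->
  Fstar mu -> mu 1%nat = 1%nat ->
  (forall k, (t < k)%nat -> mu k = 0%nat) ->
  exists l,
    Un_cv (ratio (fun k => exists c, LB t (K k) c /\ lex_le c (restr mu t))) l /\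
    f (phi * (bval (restr mu t) - 1)) <= l.
Proof.
  intros [_ [_ [Hlim _]]] HF Hmu1 Hzero.
  destruct (Hlim mu HF Hmu1) as [g [L [Hg [HgL HfL]]]].
  exists (g t); split; [exact (Hg t)|].
  rewrite <- (muF_restr mu t Hzero), HfL.
  apply (Un_cv_le_eventually g L (g t) t HgL).
  intros s Hts.
  exact (Rle_cv_lim (fun n => ratio_LB_le_restr_antitone K mu t s n Hts) (Hg s) (Hg t)).
Qed.
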